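(* Assume $C_n>0$ and $\lambda\ge\phi\, n^{1/3}/C_n^{1/3}$ for some constant $\phi>0$. Let $[i_s,i_t]\in\mathcal P$ be a bin of the key partition such that the offline optimal takes the form of Structure 1 or Structure 2 on some sub-interval of $[i_s,i_t]$. Let $\mu_{\mathrm{th}}=\sqrt{\frac{36(B+G)^3C_n^{1/3}\log n}{\phi\, n^{1/3}}}$. If $C_n\le\left(\frac{B^2\phi}{144(B+G)^3\log n}\right)^3 n$, then $$\mathrm{gap}_{\min}(-B,[i_s,i_t])\vee\mathrm{gap}_{\min}(B,[i_s,i_t])\ge\mu_{\mathrm{th}}.$$
   Context: Setting: $n\ge 3$, $B\ge 1$, $G\ge B$, labels $y_1,\dots,y_n\in[-G,G]$; $[a,b]=\{a,\dots,b\}$; $a\vee b=\max\{a,b\}$. Offline optimal: $u_1,\dots,u_n$ is an optimal solution of: minimize $\frac12\sum_{t=1}^n(y_t-\tilde u_t)^2$ subject to $\sum_{t=2}^{n}|\tilde u_t-\tilde u_{t-1}|\le C_n$ and $-B\le\tilde u_t\le B$; with optimal dual variables $\lambda\ge0$ (TV constraint) and $\gamma^\pm_t\ge0$ (box constraints) satisfying the KKT conditions: there are $s_t\in[-1,1]$ with $s_t=\mathrm{sign}(u_{t+1}-u_t)$ whenever $u_{t+1}\ne u_t$, $s_0=s_n=0$, $u_t-y_t=\lambda(s_t-s_{t-1})+\gamma_t^--\gamma_t^+$, and $\lambda(\sum_{t=2}^n|u_t-u_{t-1}|-C_n)=0$, $\gamma_t^-(u_t+B)=0$, $\gamma_t^+(u_t-B)=0$.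 Structure 1 on $[a,b]\subseteq\{2,\dots,n-1\}$: $u_j=u_a\in(-B,B)$ for all $j\in[a,b]$, $u_b>u_{b+1}$ and $u_a>u_{a-1}$. Structure 2 on $[a,b]\subseteq\{2,\dots,n-1\}$: $u_j=u_a\in(-B,B)$ for all $j\in[a,b]$, $u_b<u_{b+1}$ and $u_a<u_{a-1}$. For a bin $[a,b]$ and $\beta\in\mathbb R$, $\mathrm{gap}_{\min}(\beta,[a,b])=\min_{j\in[a,b]}|u_j-\beta|$. Key partition $\mathcal P$: $[n]$ is partitioned greedily into consecutive bins: the first bin starts at $i_s=1$; a bin starting at $i_s$ ends at the largest $i_t\in[i_s,n]$ such that $\sum_{j=i_s+1}^{i_t}|u_j-u_{j-1}|\le B/\sqrt{i_t-i_s+1}$; the next bin starts at $i_t+1$, until $n$ is covered. *)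

From HB Require Import structures.
From mathcomp Require Import all_boot all_order all_algebra.
From mathcomp Require Import all_classical all_reals all_analysis.
Set Implicit Arguments. Unset Strict Implicit. Unset Printing Implicit Defensive.
Import Order.TTheory GRing.Theory Num.Theory.
Local Open Scope ring_scope.

Section Defs.
Variable R : realType.
Implicit Types (u y v : nat -> R) (a b n : nat) (B beta : R).

Definition tv u a b : R := \sum_(a.+1 <= j < b.+1) `|u j - u j.-1|.

Definition objective n y v : R := 2^-1 * \sum_(1 <= t < n.+1) (y t - v t) ^+ 2.

Definition feasible n C B v : Prop :=
  tv v 1 n <= C /\ (forall t, (1 <= t <= n)%N -> - B <= v t <= B).

Definition offline_optimal n y C B u : Prop :=
  feasible n C B u /\ (forall v, feasible n C B v -> objective n y u <= objective n y v).

(* KKT conditions with dual variables lam (TV), gm = gamma^-, gp = gamma^+ *)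
Definition KKT n y C B u (lam : R) (gm gp : nat -> R) : Prop :=
  0 <= lam /\ (forall t, (1 <= t <= n)%N -> 0 <= gm t /\ 0 <= gp t) /\
  (exists s : nat -> R,
     [/\ s 0%N = 0, s n = 0,
         (forall t, (t <= n)%N -> -1 <= s t <= 1),
         (forall t, (1 <= t < n)%N -> u t.+1 != u t -> s t = Num.sg (u t.+1 - u t)) &
         (forall t, (1 <= t <= n)%N -> u t - y t = lam * (s t - s t.-1) + gm t - gp t)]) /\
  lam * (tv u 1 n - C) = 0 /\
  (forall t, (1 <= t <= n)%N -> gm t * (u t + B) = 0 /\ gp t * (u t - B) = 0).

Definition structure1 n u B a b : Prop :=
  [/\ (2 <= a)%N /\ (a <= b)%N /\ (b <= n.-1)%N,
      (forall j, (a <= j <= b)%N -> u j = u a),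
      - B < u a < B, u b > u b.+1 & u a > u a.-1].

Definition structure2 n u B a b : Prop :=
  [/\ (2 <= a)%N /\ (a <= b)%N /\ (b <= n.-1)%N,
      (forall j, (a <= j <= b)%N -> u j = u a),
      - B < u a < B, u b < u b.+1 & u a < u a.-1].

Definition gap_min u beta a b : R :=
  \big[Num.min/`|u a - beta|]_(a <= j < b.+1) `|u j - beta|.

Definition bin_end n u B a : nat :=
  \max_(a <= b < n.+1 | tv u a b <= B / Num.sqrt ((b - a + 1)%:R)) b.

Inductive key_bin n u B : nat -> nat -> Prop :=
| key_bin_first : key_bin n u B 1 (bin_end n u B 1)
| key_bin_next a b : key_bin n u B a b -> (b < n)%N ->
    key_bin n u B b.+1 (bin_end n u B b.+1).

End Defs.

From HB Require Import structures.
From mathcomp Require Import all_boot all_order all_algebra.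
From mathcomp Require Import all_classical all_reals all_analysis.
From mathcomp Require Import ring lra.
Import Order.TTheory GRing.Theory Num.Theory.
Local Open Scope ring_scope.

(* On a bin of the key partition the total variation of [u] is at
   most [B], so [u] cannot come close to [-B] at one index of the bin and close
   to [B] at another: the two minimal gaps add up to at least [2B - B = B],
   and the larger one is at least [B / 2].  The constant 144 = 4 * 36 in the
   bound on [C] is exactly what makes mu_th <= B / 2. *)

Lemma bigmax_nat_attained (P : pred nat) {a m : nat} : (a <= m)%N -> P a ->
  [/\ (a <= \max_(a <= b < m.+1 | P b) b)%N, (\max_(a <= b < m.+1 | P b) b <= m)%N
     & P (\max_(a <= b < m.+1 | P b) b)].
Proof.
move=> am Pa; set k := \max_(_ <= b < _ | _) _.
have ak : (a <= k)%N.
  by apply: (@leq_bigmax_seq _ _ _ (fun b => b) a); rewrite ?mem_index_iota ?leqnn ?ltnS.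
split=> //.
  by apply/bigmax_leqP_seq => i; rewrite mem_index_iota ltnS => /andP[].
(* [0] is the value of [\max] on an empty selection, excluded since [P a]. *)
have : (k == 0)%N || P k.
  rewrite /k; elim/big_ind: _ => [//|i j Hi Hj|i -> //]; last by rewrite orbT.
  by rewrite /maxn; case: ifP.
by case/orP=> [/eqP k0|//]; move: ak Pa; rewrite k0 leqn0 => /eqP ->.
Qed.

Section TotalVariation.
Context {R : realType} (u : nat -> R).

Lemma tv_ge0 a b : 0 <= tv u a b.
Proof. exact: sumr_ge0. Qed.

Lemma tv_cat {a j b} : (a <= j <= b)%N -> tv u a b = tv u a j + tv u j b.
Proof. by case/andP=> aj jb; rewrite /tv -big_cat_nat. Qed.

Lemma tv_subinterval {a j k b} : (a <= j)%N -> (j <= k <= b)%N ->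
  tv u j k <= tv u a b.
Proof.
move=> aj /andP[jk kb].
rewrite (@tv_cat a j b) ?aj ?(leq_trans jk kb) // (@tv_cat j k b) ?jk //.
by have := tv_ge0 a j; have := tv_ge0 k b; lra.
Qed.

Lemma dist_le_tv {j k} : (j <= k)%N -> `|u k - u j| <= tv u j k.
Proof.
move=> jk; rewrite -telescope_sumr // /tv big_add1 /=.
by apply: ler_norm_sum.
Qed.

Lemma oscillation_le_tv {a b j k} : (a <= j <= b)%N -> (a <= k <= b)%N ->
  `|u j - u k| <= tv u a b.
Proof.
wlog jk : j k / (j <= k)%N => [hwlog|] hj hk.
  by case: (leqP j k) => [|/ltnW] jk; [|rewrite distrC]; apply: hwlog.
case/andP: hj => aj _; case/andP: hk => _ kb.
by rewrite distrC (le_trans (dist_le_tv jk)) // tv_subinterval // jk.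
Qed.

End TotalVariation.

Section KeyPartition.
Context {R : realType} {n : nat} {u : nat -> R} {B : R}.
Hypothesis B_ge0 : 0 <= B.

Lemma bin_end_bounds {a} : (a <= n)%N ->
  [/\ (a <= bin_end n u B a)%N, (bin_end n u B a <= n)%N &
      tv u a (bin_end n u B a) <= B].
Proof.
move=> an; have Pa : tv u a a <= B / Num.sqrt ((a - a + 1)%:R).
  by rewrite /tv big_geq // subnn add0n sqrtr1 divr1.
have [ab bn Pb] :=
  bigmax_nat_attained (fun b => tv u a b <= B / Num.sqrt ((b - a + 1)%:R)) an Pa.
split=> //.
apply: le_trans Pb _; rewrite ler_pdivrMr; last by rewrite sqrtr_gt0 ltr0n addn1.
by apply: ler_peMr => //; rewrite -[X in X <= _]sqrtr1 ler_sqrt // ler1n addn1.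
Qed.

Lemma key_bin_tv_le {a b} : (1 <= n)%N -> key_bin n u B a b ->
  (a <= b <= n)%N /\ tv u a b <= B.
Proof.
move=> n1; elim=> [|a' b' _ _ b'n].
  by have [-> -> ->] := bin_end_bounds n1.
by have [-> -> ->] := bin_end_bounds b'n.
Qed.

End KeyPartition.

Section Gaps.
Context {R : realType} (u : nat -> R).

Lemma gap_min_attained beta {a b} : (a <= b)%N ->
  exists2 j, (a <= j <= b)%N & gap_min u beta a b = `|u j - beta|.
Proof.
move=> ab; rewrite /gap_min big_seq; elim/big_ind: _ => [|x y [i hi ->] [j hj ->]|i].
- by exists a; rewrite ?leqnn.
- by case: (leP `|u i - beta| `|u j - beta|) => _; [exists i | exists j].
- by rewrite mem_index_iota ltnS => hi; exists i.
Qed.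

Lemma gap_min_sum beta D {a b} : (a <= b)%N ->
  (forall j k, (a <= j <= b)%N -> (a <= k <= b)%N -> `|u j - u k| <= D) ->
  2 * beta - D <= gap_min u (- beta) a b + gap_min u beta a b.
Proof.
move=> ab osc; have [j hj ->] := gap_min_attained (- beta) ab.
have [k hk ->] := gap_min_attained beta ab.
have := osc j k hj hk; have := ler_norm (beta - - beta).
have := ler_distD (u k) beta (- beta); rewrite [`|beta - u k|]distrC.
have := ler_distD (u j) (u k) (- beta); rewrite [`|u k - u j|]distrC.
have -> : beta - - beta = 2 * beta by ring.
lra.
Qed.

End Gaps.

Lemma cube_root_le {R : realType} {C K x : R} : 0 <= C -> 0 <= K -> 0 <= x ->
  C <= K ^+ 3 * x -> C `^ 3%:R^-1 <= K * x `^ 3%:R^-1.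
Proof.
move=> C0 K0 x0 hC.
have -> : K = (K ^+ 3) `^ 3%:R^-1.
  by rewrite -powR_mulrn // -powRrM mulfV ?powRr1 // pnatr_eq0.
rewrite -powRM ?exprn_ge0 //; apply: ge0_ler_powR => //.
by rewrite nnegrE mulr_ge0 ?exprn_ge0.
Qed.

Lemma mu_th_le_half {R : realType} {n : nat} {B G C phi : R} :
  (3 <= n)%N -> 1 <= B -> B <= G -> 0 < C -> 0 < phi ->
  C <= (B ^+ 2 * phi / (144%:R * (B + G) ^+ 3 * ln (n%:R : R))) ^+ 3 * n%:R ->
  Num.sqrt (36%:R * (B + G) ^+ 3 * C `^ (3%:R^-1) * ln (n%:R : R)
            / (phi * n%:R `^ (3%:R^-1))) <= B / 2.
Proof.
move=> n3 B1 BG C0 phi0 hC.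
have n0 : (0 : R) < n%:R by rewrite ltr0n (leq_trans _ n3).
have L0 : 0 < ln (n%:R : R) by rewrite ln_gt0 // ltr1n (leq_trans _ n3).
have S0 : 0 < (B + G) ^+ 3 by rewrite exprn_gt0 //; lra.
have N0 : 0 < (n%:R : R) `^ 3%:R^-1 by rewrite powR_gt0.
set K := B ^+ 2 * phi / _ in hC.
have K0 : 0 < K by rewrite divr_gt0 ?mulr_gt0 ?exprn_gt0 //; lra.
have hC3 := cube_root_le (ltW C0) (ltW K0) (ltW n0) hC.
rewrite -[B / 2]ger0_norm -?sqrtr_sqr ?ler_sqrt ?sqr_ge0 //; last by lra.
rewrite ler_pdivrMr ?mulr_gt0 //.
have -> : (B / 2) ^+ 2 * (phi * n%:R `^ 3%:R^-1)
    = 36%:R * (B + G) ^+ 3 * (K * n%:R `^ 3%:R^-1) * ln n%:R.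
  by rewrite /K; field; rewrite gt_eqF //=; apply/eqP; lra.
by rewrite ler_pM2r // ler_pM2l // mulr_gt0.
Qed.

Theorem lemma7 (R : realType) (n : nat) (B G C phi lam : R)
  (y u gm gp : nat -> R) (i_s i_t : nat) :
  (3 <= n)%N -> 1 <= B -> B <= G ->
  (forall t, (1 <= t <= n)%N -> - G <= y t <= G) ->
  offline_optimal n y C B u ->
  KKT n y C B u lam gm gp ->
  0 < C -> 0 < phi ->
  lam >= phi * (n%:R `^ (3%:R^-1)) / (C `^ (3%:R^-1)) ->
  key_bin n u B i_s i_t ->
  (exists a b, [/\ (i_s <= a)%N, (b <= i_t)%N &
       (structure1 n u B a b \/ structure2 n u B a b)]) ->
  C <= (B ^+ 2 * phi / (144%:R * (B + G) ^+ 3 * ln (n%:R : R))) ^+ 3 * n%:R ->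
  Num.sqrt (36%:R * (B + G) ^+ 3 * C `^ (3%:R^-1) * ln (n%:R : R)
            / (phi * n%:R `^ (3%:R^-1)))
  <= Num.max (gap_min u (- B) i_s i_t) (gap_min u B i_s i_t).
Proof.
move=> n3 B1 BG _ _ _ C0 phi0 _ bin _ hC.
apply: le_trans (mu_th_le_half n3 B1 BG C0 phi0 hC) _.
have B0 : 0 <= B by lra.
have [/andP[st _] tvB] := key_bin_tv_le B0 (ltnW (ltnW n3)) bin.
have osc j k : (i_s <= j <= i_t)%N -> (i_s <= k <= i_t)%N -> `|u j - u k| <= B.
  by move=> hj hk; apply: le_trans (oscillation_le_tv u hj hk) tvB.
have := gap_min_sum u B B st osc.
by case: (leP (gap_min u (- B) i_s i_t) (gap_min u B i_s i_t)); lra.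
Qed.
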